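(* Let $\delta\ge0$ and let $T\in C^1(\mathbb{T}^1)$ be a diffeomorphism with $T'>0$ and rotation number $\rho\in D_\delta$. Suppose $T$ has an invariant probability measure with a continuous positive density $h$, and that for some constant $\sigma\in[0,1+\delta)$ there is $C$ with $|(T^{q_n})'(\xi)-1|\le CE_{n,\sigma}$ for all $n\ge0$, $\xi\in\mathbb{T}^1$. Then there is $C'$ with $|(T^{q_n})'(\xi)-1|\le C'\Delta_n^{\sigma/(1+\delta)}$ for all $n\ge0$, $\xi\in\mathbb{T}^1$, and $h\in C^{\max\{0,\sigma-\delta\}}(\mathbb{T}^1)$.
   Context: An irrational $\rho$ is in $D_\delta$ if there is $C>0$ with $|\rho-p/q|\ge Cq^{-2-\delta}$ for all rationals $p/q$. Write $\rho\in(0,1)$ as a continued fraction $\rho=[k_1,k_2,\dots]$ with convergents $p_n/q_n$, where $p_0=0,q_0=1,p_{-1}=1,q_{-1}=0$, $p_n=k_np_{n-1}+p_{n-2}$, $q_n=k_nq_{n-1}+q_{n-2}$. Set $\Delta_n=|q_n\rho-p_n|$ for $n\ge-1$ (so $\Delta_{-1}=1$), and for $\sigma\ge0$ set $E_{n,\sigma}=\sum_{k=0}^n\frac{\Delta_n}{\Delta_{n-k}}\Delta_{n-k-1}^\sigma$. $C^\alpha$ for $\alpha\in(0,1]$ means $\alpha$-Hölder; $C^0$ means continuous. *)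

From Stdlib Require Import Reals Lra Lia.
From Coquelicot Require Import Coquelicot.
Open Scope R_scope.

(* Gauss map x |-> frac(1/x); the n-th partial quotient of rho is
   k_n = floor(1 / G^{n-1}(rho)), so rho = [k_1, k_2, ...]. *)
Definition gauss (x : R) : R := / x - IZR (Int_part (/ x)).

Definition cf_k (rho : R) (n : nat) : nat :=
  Z.to_nat (Int_part (/ Nat.iter (Nat.pred n) gauss rho)).

(* cf_pq rho n = (p_n, q_n, p_{n-1}, q_{n-1}), with p_0 = 0, q_0 = 1,
   p_{-1} = 1, q_{-1} = 0, p_n = k_n p_{n-1} + p_{n-2}, etc. *)
Fixpoint cf_pq (rho : R) (n : nat) : nat * nat * nat * nat :=
  match n with
  | O => (0%nat, 1%nat, 1%nat, 0%nat)
  | S m =>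
      let '(p, q, p', q') := cf_pq rho m in
      let k := cf_k rho (S m) in
      ((k * p + p')%nat, (k * q + q')%nat, p, q)
  end.

Definition cf_p (rho : R) (n : nat) : nat := let '(p, _, _, _) := cf_pq rho n in p.
Definition cf_q (rho : R) (n : nat) : nat := let '(_, q, _, _) := cf_pq rho n in q.
Definition cf_p_prev (rho : R) (n : nat) : nat := let '(_, _, p', _) := cf_pq rho n in p'.
Definition cf_q_prev (rho : R) (n : nat) : nat := let '(_, _, _, q') := cf_pq rho n in q'.

Definition cf_Delta (rho : R) (n : nat) : R :=
  Rabs (INR (cf_q rho n) * rho - INR (cf_p rho n)).
(* cf_Delta_prev n = Delta_{n-1}, for n >= 0 (so cf_Delta_prev 0 = Delta_{-1} = 1) *)
Definition cf_Delta_prev (rho : R) (n : nat) : R :=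
  Rabs (INR (cf_q_prev rho n) * rho - INR (cf_p_prev rho n)).

Definition E_ns (rho : R) (n : nat) (sigma : R) : R :=
  sum_f_R0 (fun k => cf_Delta rho n / cf_Delta rho (n - k) * Rpower (cf_Delta_prev rho (n - k)) sigma) n.

Definition irrational (x : R) : Prop :=
  forall (p : Z) (q : nat), (0 < q)%nat -> x <> IZR p / INR q.

Definition D_delta (delta rho : R) : Prop :=
  irrational rho /\
  exists C : R, 0 < C /\
    forall (p : Z) (q : nat), (0 < q)%nat ->
      C * Rpower (INR q) (- 2 - delta) <= Rabs (rho - IZR p / INR q).

(* C^alpha on the circle, for a 1-periodic f : R -> R:
   alpha = 0 : continuous; alpha in (0,1] : alpha-Hoelder. *)
Definition C_alpha (alpha : R) (f : R -> R) : Prop :=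
  (forall x, continuous f x) /\
  (0 < alpha -> exists C : R, forall x y,
      Rabs (f x - f y) <= C * Rpower (Rabs (x - y)) alpha).

(* F : R -> R is the lift of a C^1 circle diffeomorphism T with T' > 0 *)
Definition C1_circle_diffeo_lift (F : R -> R) : Prop :=
  (forall x, F (x + 1) = F x + 1) /\
  (forall x, ex_derive F x) /\
  (forall x, continuous (Derive F) x) /\
  (forall x, 0 < Derive F x).

(* rotation number of the lift F (here normalized so that it lies in (0,1)) *)
Definition rotation_number (F : R -> R) (rho : R) : Prop :=
  is_lim_seq (fun n => Nat.iter n F 0 / INR n) rho.

Definition invariant_density (F h : R -> R) : Prop :=
  (forall x, h (x + 1) = h x) /\
  (forall x, continuous h x) /\
  (forall x, 0 < h x) /\
  RInt h 0 1 = 1 /\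
  (forall a b, RInt h (F a) (F b) = RInt h a b).

(* Let H(x) = int_0^x h.  Invariance of h dx gives H(F^q x) = H(x) + q rho and
   h(F^q x) (F^q)'(x) = h(x), so x |-> F^(q_n) x - p_n is conjugate by H to the rotation by
   q_n rho - p_n = +-Delta_n and moves h by at most sup h |(F^(q_n))' - 1|.
   With s = sigma/(1+delta), the Diophantine bound Delta_n >= c Delta_(n-1)^(1+delta) and
   Delta_(n+2) <= Delta_n / 2 make E_(n,sigma) a geometric sum dominated by its last term,
   so E_(n,sigma) <= K Delta_n^s.  For the Hoelder bound, expand H(y) - H(x) greedily in the
   scales Delta_m, Delta_(m+1), ..., where Delta_m <= H(y) - H(x) < Delta_(m-1): the scale
   Delta_k costs at most Delta_k Delta_(k+1)^(s-1) <= C Delta_k^(sigma-delta), and these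
   costs again sum geometrically. *)

From Stdlib Require Import Reals Lra Lia ZArith.
From Coquelicot Require Import Coquelicot.
Open Scope R_scope.

Lemma Rpower_pos (x y : R) : 0 < Rpower x y.
Proof. apply exp_pos. Qed.

Lemma Rpower_1_l (y : R) : Rpower 1 y = 1.
Proof. unfold Rpower. rewrite ln_1, Rmult_0_r. apply exp_0. Qed.

Lemma Rle_Rpower_l_nonpos (a b c : R) : c <= 0 -> 0 < a <= b -> Rpower b c <= Rpower a c.
Proof.
  intros Hc Hab. replace c with (- - c) by ring. rewrite (Rpower_Ropp b (- c)), (Rpower_Ropp a (- c)).
  apply Rinv_le_contravar; [apply Rpower_pos|apply Rle_Rpower_l; lra].
Qed.

Lemma Rpower_inv_l (x y : R) : 0 < x -> Rpower (/ x) y = / Rpower x y.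
Proof. intro Hx. unfold Rpower. rewrite ln_Rinv by exact Hx. rewrite <- exp_Ropp. f_equal. ring. Qed.

Lemma Rpower_sub_1 (x y : R) : 0 < x -> Rpower x y = x * Rpower x (y - 1).
Proof. intro Hx. rewrite <- (Rpower_1 x) at 2 by exact Hx. rewrite <- Rpower_plus. f_equal. ring. Qed.

Lemma gauss_range (x : R) : 0 < x -> 0 <= gauss x < 1.
Proof. intro Hx. unfold gauss. destruct (base_Int_part (/ x)). lra. Qed.

Lemma irrational_neq0 (x : R) : irrational x -> x <> 0.
Proof. intros Hx E. apply (Hx 0%Z 1%nat); [lia|]. rewrite E. simpl. field. Qed.

Lemma irrational_gauss (x : R) : 0 < x -> irrational x -> irrational (gauss x).
Proof.
  intros Hx Hirr p q Hq E. unfold gauss in E.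
  set (k := Int_part (/ x)) in E.
  assert (Hq0 : 0 < INR q) by (apply lt_0_INR; lia).
  assert (Ex : / x = IZR (p + k * Z.of_nat q) / INR q).
  { rewrite plus_IZR, mult_IZR, <- INR_IZR_INZ.
    replace (IZR p) with ((/ x - IZR k) * INR q) by (rewrite E; field; lra). field. lra. }
  assert (Hpos : (0 < p + k * Z.of_nat q)%Z).
  { apply lt_IZR. apply (Rmult_lt_reg_r (/ INR q)); [apply Rinv_0_lt_compat; lra|].
    rewrite Rmult_0_l. fold (Rdiv (IZR (p + k * Z.of_nat q)) (INR q)).
    rewrite <- Ex. apply Rinv_0_lt_compat; lra. }
  apply (Hirr (Z.of_nat q) (Z.to_nat (p + k * Z.of_nat q))); [lia|].
  rewrite INR_IZR_INZ, Z2Nat.id, <- INR_IZR_INZ by lia.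
  assert (IZR (p + k * Z.of_nat q) <> 0) by (apply not_0_IZR; lia).
  rewrite <- (Rinv_inv x), Ex. field. lra.
Qed.

Lemma Int_part_ge1 (r : R) : 1 < r -> (1 <= Int_part r)%Z.
Proof.
  intro H. destruct (base_Int_part r).
  assert (0 < IZR (Int_part r)) by lra. apply lt_IZR in H2. lia.
Qed.

Lemma cf_pq_S (rho : R) (n : nat) :
  cf_pq rho (S n) =
  ((cf_k rho (S n) * cf_p rho n + cf_p_prev rho n)%nat,
   (cf_k rho (S n) * cf_q rho n + cf_q_prev rho n)%nat, cf_p rho n, cf_q rho n).
Proof.
  unfold cf_p, cf_q, cf_p_prev, cf_q_prev; simpl.
  destruct (cf_pq rho n) as [[[p q] p'] q']. reflexivity.
Qed.

Section ContinuedFraction.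
Variable rho : R.
Hypothesis Hrho : 0 < rho < 1.
Hypothesis Hirr : irrational rho.

Definition cf_x (j : nat) : R := Nat.iter j gauss rho.

Fixpoint cf_prod (n : nat) : R :=
  match n with O => 1 | S m => cf_prod m * cf_x m end.

Lemma cf_x_irrational_range (j : nat) : irrational (cf_x j) /\ 0 < cf_x j < 1.
Proof.
  induction j as [|j [Hi Hr]]; [split; assumption|].
  change (cf_x (S j)) with (gauss (cf_x j)).
  pose proof (irrational_gauss _ (proj1 Hr) Hi) as Hi'. split; [exact Hi'|].
  pose proof (gauss_range _ (proj1 Hr)). pose proof (irrational_neq0 _ Hi'). lra.
Qed.

Lemma cf_x_range (j : nat) : 0 < cf_x j < 1.
Proof. apply cf_x_irrational_range. Qed.

Lemma cf_x_inv_gt1 (j : nat) : 1 < / cf_x j.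
Proof. rewrite <- Rinv_1. pose proof (cf_x_range j). apply Rinv_lt_contravar; lra. Qed.

Lemma cf_k_S (j : nat) : INR (cf_k rho (S j)) = IZR (Int_part (/ cf_x j)).
Proof.
  unfold cf_k; simpl Nat.pred; fold (cf_x j).
  pose proof (Int_part_ge1 _ (cf_x_inv_gt1 j)).
  rewrite INR_IZR_INZ, Z2Nat.id by lia. reflexivity.
Qed.

Lemma cf_k_ge1 (j : nat) : 1 <= INR (cf_k rho (S j)).
Proof. rewrite cf_k_S. apply IZR_le, Int_part_ge1, cf_x_inv_gt1. Qed.

Lemma cf_x_mul_S (j : nat) : cf_x j * cf_x (S j) = 1 - INR (cf_k rho (S j)) * cf_x j.
Proof.
  rewrite cf_k_S. change (cf_x (S j)) with (gauss (cf_x j)). unfold gauss.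
  pose proof (cf_x_range j). field. lra.
Qed.

Lemma cf_prod_pos (n : nat) : 0 < cf_prod n.
Proof. induction n; simpl; [lra|]. pose proof (cf_x_range n). nra. Qed.

Lemma cf_signed_errors (n : nat) :
  INR (cf_q rho n) * rho - INR (cf_p rho n) = (-1) ^ n * cf_prod (S n) /\
  INR (cf_q_prev rho n) * rho - INR (cf_p_prev rho n) = - (-1) ^ n * cf_prod n.
Proof.
  induction n as [|n [IH IH']].
  - unfold cf_q, cf_p, cf_q_prev, cf_p_prev, cf_x; simpl. split; ring.
  - unfold cf_q, cf_p, cf_q_prev, cf_p_prev. rewrite cf_pq_S.
    fold (cf_q rho n) (cf_p rho n). split; [|rewrite IH; simpl pow; ring].
    rewrite !plus_INR, !mult_INR.
    match goal with |- ?l = _ => replace l with (INR (cf_k rho (S n)) * (INR (cf_q rho n) * rho - INR (cf_p rho n))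
      + (INR (cf_q_prev rho n) * rho - INR (cf_p_prev rho n))) by ring end.
    rewrite IH, IH'. change (cf_prod (S (S n))) with (cf_prod n * cf_x n * cf_x (S n)).
    change (cf_prod (S n)) with (cf_prod n * cf_x n).
    transitivity ((-1) * (-1) ^ n * (cf_prod n * (1 - INR (cf_k rho (S n)) * cf_x n))); [ring|].
    rewrite <- cf_x_mul_S. simpl pow. ring.
Qed.

Lemma cf_Delta_eq_prod (n : nat) : cf_Delta rho n = cf_prod (S n).
Proof.
  unfold cf_Delta. rewrite (proj1 (cf_signed_errors n)), Rabs_mult, pow_1_abs, Rmult_1_l.
  apply Rabs_right. left; apply cf_prod_pos.
Qed.

Lemma cf_Delta_prev_eq_prod (n : nat) : cf_Delta_prev rho n = cf_prod n.
Proof.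
  unfold cf_Delta_prev. rewrite (proj2 (cf_signed_errors n)), Rabs_mult, Rabs_Ropp, pow_1_abs, Rmult_1_l.
  apply Rabs_right. left; apply cf_prod_pos.
Qed.

Lemma cf_Delta_prev_S (n : nat) : cf_Delta_prev rho (S n) = cf_Delta rho n.
Proof. rewrite cf_Delta_prev_eq_prod, cf_Delta_eq_prod. reflexivity. Qed.

Lemma cf_Delta_prev_pos (n : nat) : 0 < cf_Delta_prev rho n.
Proof. rewrite cf_Delta_prev_eq_prod. apply cf_prod_pos. Qed.

Lemma cf_Delta_pos (n : nat) : 0 < cf_Delta rho n.
Proof. rewrite cf_Delta_eq_prod. apply cf_prod_pos. Qed.

Lemma cf_Delta_0 : cf_Delta rho 0 = rho.
Proof. rewrite cf_Delta_eq_prod. simpl. unfold cf_x; simpl. ring. Qed.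

Lemma cf_Delta_prev_0 : cf_Delta_prev rho 0 = 1.
Proof. rewrite cf_Delta_prev_eq_prod. reflexivity. Qed.

Lemma cf_Delta_S_lt (n : nat) : cf_Delta rho (S n) < cf_Delta rho n.
Proof.
  rewrite !cf_Delta_eq_prod. change (cf_prod (S (S n))) with (cf_prod (S n) * cf_x (S n)).
  pose proof (cf_prod_pos (S n)). pose proof (cf_x_range (S n)). nra.
Qed.

Lemma cf_Delta_le (i j : nat) : (i <= j)%nat -> cf_Delta rho j <= cf_Delta rho i.
Proof. induction 1; [lra|]. pose proof (cf_Delta_S_lt m). lra. Qed.

(* [x_j x_(j+1) = 1 - k_(j+1) x_j <= 1/2]: either [x_j <= 1/2], or [k_(j+1) = 1]. *)
Lemma cf_x_mul_S_le_half (j : nat) : cf_x j * cf_x (S j) <= / 2.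
Proof.
  pose proof (cf_x_range j). pose proof (cf_x_range (S j)).
  destruct (Rle_dec (cf_x j) (/ 2)); [nra|].
  rewrite cf_x_mul_S. pose proof (cf_k_ge1 j). nra.
Qed.

Lemma cf_Delta_SS_le_half (n : nat) : cf_Delta rho (S (S n)) <= cf_Delta rho n / 2.
Proof.
  rewrite !cf_Delta_eq_prod.
  change (cf_prod (S (S (S n)))) with (cf_prod (S n) * cf_x (S n) * cf_x (S (S n))).
  rewrite Rmult_assoc.
  pose proof (cf_prod_pos (S n)). pose proof (cf_x_mul_S_le_half (S n)). nra.
Qed.

Lemma cf_Delta_2k_le (k : nat) : cf_Delta rho (2 * k) <= (/ 2) ^ k.
Proof.
  induction k as [|k IH]; [simpl; rewrite cf_Delta_0; lra|].
  replace (2 * S k)%nat with (S (S (2 * k))) by lia.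
  pose proof (cf_Delta_SS_le_half (2 * k)). simpl pow. lra.
Qed.

Lemma cf_Delta_small (e : R) : 0 < e -> exists n, cf_Delta rho n < e.
Proof.
  intro He. destruct (pow_lt_1_zero (/ 2) ltac:(rewrite Rabs_right; lra) e He) as [k Hk].
  exists (2 * k)%nat. specialize (Hk k (le_n k)).
  rewrite Rabs_right in Hk by (left; apply pow_lt; lra).
  pose proof (cf_Delta_2k_le k). lra.
Qed.

Lemma cf_Delta_bracket (d : R) : 0 < d < cf_Delta rho 0 ->
  exists n, cf_Delta rho (S n) <= d < cf_Delta rho n.
Proof.
  intros [Hd Hd0]. destruct (cf_Delta_small d Hd) as [N HN]. apply Rlt_le in HN.
  induction N as [|N IH]; [lra|].
  destruct (Rle_lt_dec (cf_Delta rho N) d); [apply IH; lra|]. exists N; lra.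
Qed.

Lemma cf_q_ge1 (n : nat) : 1 <= INR (cf_q rho n).
Proof.
  induction n as [|n IH]; [unfold cf_q; simpl; lra|].
  unfold cf_q at 1. rewrite cf_pq_S, plus_INR, mult_INR. fold (cf_q rho n).
  pose proof (cf_k_ge1 n). pose proof (pos_INR (cf_q_prev rho n)). nra.
Qed.

Lemma cf_q_prod_identity (n : nat) :
  INR (cf_q rho n) * cf_prod n + INR (cf_q_prev rho n) * cf_prod (S n) = 1.
Proof.
  induction n as [|n IH]; [unfold cf_q, cf_q_prev; simpl; ring|].
  unfold cf_q, cf_q_prev. rewrite cf_pq_S, plus_INR, mult_INR. fold (cf_q rho n).
  rewrite <- IH. change (cf_prod (S (S n))) with (cf_prod n * cf_x n * cf_x (S n)).
  change (cf_prod (S n)) with (cf_prod n * cf_x n).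
  transitivity (INR (cf_q rho n) * cf_prod n * (INR (cf_k rho (S n)) * cf_x n + cf_x n * cf_x (S n))
    + INR (cf_q_prev rho n) * (cf_prod n * cf_x n)); [ring|].
  rewrite cf_x_mul_S. ring.
Qed.

Lemma cf_q_mul_Delta_le1 (n : nat) : INR (cf_q rho (S n)) * cf_Delta rho n <= 1.
Proof.
  pose proof (cf_q_prod_identity (S n)) as E.
  unfold cf_q_prev in E. rewrite cf_pq_S in E. fold (cf_q rho n) in E.
  rewrite cf_Delta_eq_prod.
  pose proof (pos_INR (cf_q rho n)). pose proof (cf_prod_pos (S (S n))). nra.
Qed.

Lemma D_delta_cf_Delta_lower (delta : R) : 0 <= delta -> D_delta delta rho ->
  exists c, 0 < c /\ forall n, c * Rpower (cf_Delta_prev rho n) (1 + delta) <= cf_Delta rho n.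
Proof.
  intros Hd [_ [C [HC HD]]]. exists (Rmin C rho). split; [apply Rmin_pos; lra|].
  intros [|m].
  - rewrite cf_Delta_prev_0, Rpower_1_l, cf_Delta_0, Rmult_1_r. apply Rmin_r.
  - rewrite cf_Delta_prev_S.
    set (q := INR (cf_q rho (S m))). set (p := INR (cf_p rho (S m))).
    pose proof (cf_q_ge1 (S m)) as Hq. fold q in Hq.
    pose proof (cf_q_mul_Delta_le1 m) as HqD. fold q in HqD.
    pose proof (cf_Delta_pos m) as Hm.
    (* [Delta_(m+1) = q |rho - p/q| >= C q^(-1-delta) >= C Delta_m^(1+delta)], as [q <= 1/Delta_m]. *)
    assert (E : cf_Delta rho (S m) = q * Rabs (rho - p / q)).
    { unfold cf_Delta. fold q p. rewrite <- (Rabs_right q) at 2 by lra.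
      rewrite <- Rabs_mult. f_equal. field. lra. }
    assert (Hdio : C * Rpower q (- 2 - delta) <= Rabs (rho - p / q)).
    { unfold p. rewrite INR_IZR_INZ. apply HD. apply INR_lt. simpl. fold q. lra. }
    assert (Eq : q * Rpower q (- 2 - delta) = / Rpower q (1 + delta)).
    { rewrite <- Rpower_Ropp, (Rpower_sub_1 q (- (1 + delta))) by lra. do 2 f_equal. ring. }
    assert (Hpow : Rpower (cf_Delta rho m) (1 + delta) <= / Rpower q (1 + delta)).
    { rewrite <- Rpower_inv_l by lra. apply Rle_Rpower_l; [lra|]. split; [exact Hm|].
      apply (Rmult_le_reg_l q); [lra|]. rewrite Rinv_r by lra. exact HqD. }
    rewrite E. apply Rle_trans with (C * Rpower (cf_Delta rho m) (1 + delta)).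
    { apply Rmult_le_compat_r; [left; apply Rpower_pos|apply Rmin_l]. }
    rewrite <- Eq in Hpow.
    apply Rmult_le_compat_l with (r := C) in Hpow; [|lra].
    apply Rmult_le_compat_l with (r := q) in Hdio; [|lra]. nra.
Qed.

End ContinuedFraction.

Lemma sum_f_R0_le_two_step_geometric (b : nat -> R) (r : R) : 0 <= r < 1 ->
  (forall j, 0 <= b j) -> (forall j, b j <= b (S j)) -> (forall j, b j <= r * b (S (S j))) ->
  forall n, sum_f_R0 b n <= 2 / (1 - r) * b n.
Proof.
  intros Hr Hpos Hinc Hstep.
  (* The potential [(b_n + b_(n+1)) / (1 - r)] dominates the partial sums. *)
  assert (Hpot : forall n, sum_f_R0 b (S n) * (1 - r) <= b n + b (S n)).
  { induction n as [|n IH]; simpl sum_f_R0 in *.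
    - pose proof (Hpos 0%nat). pose proof (Hpos 1%nat). nra.
    - pose proof (Hstep n). pose proof (Hpos (S (S n))). nra. }
  intro n. apply (Rmult_le_reg_r (1 - r)); [lra|].
  replace (2 / (1 - r) * b n * (1 - r)) with (2 * b n) by (field; lra).
  destruct n as [|n].
  - simpl. pose proof (Hpos 0%nat). nra.
  - pose proof (Hpot n). pose proof (Hinc n). lra.
Qed.

Lemma E_ns_nonneg (rho sigma : R) (n : nat) : 0 < rho < 1 -> irrational rho -> 0 <= E_ns rho n sigma.
Proof.
  intros Hrho Hirr. apply cond_pos_sum. intro k. apply Rmult_le_pos; [|left; apply Rpower_pos].
  apply Rdiv_le_0_compat; [left|]; apply cf_Delta_pos; auto.
Qed.

Lemma Rdiv_lt_1 (a b : R) : 0 < b -> a < b -> a / b < 1.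
Proof. intros Hb Hab. apply Rmult_lt_reg_r with b; [lra|]. unfold Rdiv. rewrite Rmult_assoc, Rinv_l; lra. Qed.

Lemma cf_Delta_Rpower_nonpos_SS (rho t : R) (j : nat) : 0 < rho < 1 -> irrational rho -> t <= 0 ->
  Rpower (cf_Delta rho j) t <= Rpower 2 t * Rpower (cf_Delta rho (S (S j))) t.
Proof.
  intros Hrho Hirr Ht. rewrite Rpower_mult_distr by (try lra; apply cf_Delta_pos; auto).
  apply Rle_Rpower_l_nonpos; [exact Ht|].
  pose proof (cf_Delta_pos rho Hrho Hirr (S (S j))). pose proof (cf_Delta_SS_le_half rho Hrho Hirr j). lra.
Qed.

(* [Delta_(j-1)^sigma = (Delta_(j-1)^(1+delta))^s <= (Delta_j / c)^s] with [s = sigma / (1 + delta)]. *)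
Lemma E_ns_term_le (rho delta sigma c : R) (n j : nat) : 0 < rho < 1 -> irrational rho ->
  0 <= delta -> 0 <= sigma -> 0 < c ->
  (forall n, c * Rpower (cf_Delta_prev rho n) (1 + delta) <= cf_Delta rho n) ->
  cf_Delta rho n / cf_Delta rho j * Rpower (cf_Delta_prev rho j) sigma
    <= Rpower (/ c) (sigma / (1 + delta)) * cf_Delta rho n
       * Rpower (cf_Delta rho j) (sigma / (1 + delta) - 1).
Proof.
  intros Hrho Hirr Hd Hsig Hc Hdio. set (s := sigma / (1 + delta)).
  pose proof (cf_Delta_pos rho Hrho Hirr n). pose proof (cf_Delta_pos rho Hrho Hirr j).
  pose proof (cf_Delta_prev_pos rho Hrho Hirr j).
  assert (Hprev : Rpower (cf_Delta_prev rho j) sigma <= Rpower (cf_Delta rho j) s * Rpower (/ c) s).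
  { replace sigma with ((1 + delta) * s) by (unfold s; field; lra).
    rewrite <- Rpower_mult, Rpower_mult_distr by (try apply Rinv_0_lt_compat; lra).
    apply Rle_Rpower_l; [unfold s; apply Rdiv_le_0_compat; lra|]. split; [apply Rpower_pos|].
    apply (Rmult_le_reg_l c); [lra|]. rewrite <- Rmult_assoc, Rinv_r_simpl_m by lra. apply Hdio. }
  rewrite (Rpower_sub_1 _ s) in Hprev by lra.
  apply Rle_trans with (cf_Delta rho n / cf_Delta rho j
                        * (cf_Delta rho j * Rpower (cf_Delta rho j) (s - 1) * Rpower (/ c) s)).
  - apply Rmult_le_compat_l; [apply Rdiv_le_0_compat; lra|exact Hprev].
  - right. field. lra.
Qed.

Lemma E_ns_le_Delta_pow (delta sigma rho : R) : 0 < rho < 1 -> irrational rho -> 0 <= delta ->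
  D_delta delta rho -> 0 <= sigma < 1 + delta ->
  exists K, 0 <= K /\ forall n, E_ns rho n sigma <= K * Rpower (cf_Delta rho n) (sigma / (1 + delta)).
Proof.
  intros Hrho Hirr Hd HD Hsig.
  destruct (D_delta_cf_Delta_lower rho Hrho Hirr delta Hd HD) as [c [Hc Hdio]].
  set (s := sigma / (1 + delta)). assert (Hs : s < 1) by (apply Rdiv_lt_1; lra).
  set (b j := Rpower (cf_Delta rho j) (s - 1)).
  set (r := Rpower 2 (s - 1)).
  assert (Hr : 0 <= r < 1).
  { split; [left; apply Rpower_pos|]. unfold r.
    rewrite <- (Rpower_O 2) at 2 by lra. apply Rpower_lt; lra. }
  assert (Hsum : forall n, sum_f_R0 b n <= 2 / (1 - r) * b n).
  { apply sum_f_R0_le_two_step_geometric; [exact Hr|intro; left; apply Rpower_pos| |].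
    - intro j. apply Rle_Rpower_l_nonpos; [lra|]. split; [apply cf_Delta_pos; auto|].
      left. apply cf_Delta_S_lt; auto.
    - intro j. apply cf_Delta_Rpower_nonpos_SS; auto; lra. }
  set (cs := Rpower (/ c) s). assert (Hcs : 0 < cs) by apply Rpower_pos.
  exists (cs * (2 / (1 - r))). split; [apply Rmult_le_pos; [lra|apply Rdiv_le_0_compat; lra]|].
  intro n. unfold E_ns. pose proof (cf_Delta_pos rho Hrho Hirr n).
  eapply Rle_trans.
  { apply sum_Rle with (Bn := fun k => b (n - k)%nat * (cs * cf_Delta rho n)). intros k _.
    eapply Rle_trans; [apply (E_ns_term_le rho delta sigma c); auto; lra|]. right. unfold b, cs, s. ring. }
  rewrite (sum_f_R0_skip (fun j => b j * (cs * cf_Delta rho n))), <- scal_sum.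
  fold s. rewrite (Rpower_sub_1 _ s) by lra. fold (b n).
  apply Rle_trans with (cs * cf_Delta rho n * (2 / (1 - r) * b n)).
  - apply Rmult_le_compat_l; [apply Rmult_le_pos|apply Hsum]; lra.
  - right. ring.
Qed.

Lemma add_IZR_of_add_1 (f : R -> R) (c : R) : (forall x, f (x + 1) = f x + c) ->
  forall z x, f (x + IZR z) = f x + IZR z * c.
Proof.
  intros Hf z. induction z as [|z IH|z IH] using Z.peano_ind; intro x.
  - rewrite Rplus_0_r. ring.
  - rewrite succ_IZR, <- Rplus_assoc, Hf, IH. ring.
  - unfold Z.pred. rewrite plus_IZR. replace (x + (IZR z + IZR (-1))) with (x - 1 + IZR z) by (simpl; ring).
    rewrite IH. replace x with (x - 1 + 1) at 2 by ring. rewrite Hf. ring.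
Qed.

Lemma frac_decomp (x : R) : exists z y, 0 <= y < 1 /\ x = y + IZR z.
Proof.
  exists (Int_part x), (x - IZR (Int_part x)). destruct (base_Int_part x). split; [lra|ring].
Qed.

Lemma nat_multiple_bracket (r D : R) : 0 <= r -> 0 < D -> exists b : nat, INR b * D <= r < INR b * D + D.
Proof.
  intros Hr HD. destruct (base_Int_part (r / D)) as [B1 B2].
  assert (Hq : 0 <= r / D) by (apply Rdiv_le_0_compat; lra).
  assert (Hz : (0 <= Int_part (r / D))%Z).
  { assert (Hlt : IZR (-1) < IZR (Int_part (r / D))) by (simpl; lra). apply lt_IZR in Hlt. lia. }
  exists (Z.to_nat (Int_part (r / D))). rewrite INR_IZR_INZ, Z2Nat.id by exact Hz.
  set (k := IZR (Int_part (r / D))) in *. set (t := r / D) in *.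
  assert (Er : r = t * D) by (unfold t; field; lra). rewrite Er. split; nra.
Qed.

Lemma is_lim_seq_div_INR_of_bounded_dev (u : nat -> R) (c M : R) :
  (forall n, Rabs (u n - INR n * c) <= M) -> is_lim_seq (fun n => u n / INR n) c.
Proof.
  intro Hu.
  assert (Hinv : is_lim_seq (fun n => M * / INR n) 0).
  { replace (Finite 0) with (Rbar_mult M (Rbar_inv p_infty)) by (simpl; f_equal; ring).
    apply is_lim_seq_scal_l, is_lim_seq_inv; [apply is_lim_seq_INR|discriminate]. }
  apply (is_lim_seq_le_le_loc (fun n => c - M * / INR n) _ (fun n => c + M * / INR n)).
  - exists 1%nat. intros n Hn. assert (0 < INR n) by (apply lt_0_INR; lia).
    specialize (Hu n). apply Rabs_le_between in Hu.
    replace (u n / INR n) with (c + (u n - INR n * c) * / INR n) by (field; lra).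
    assert (0 < / INR n) by (apply Rinv_0_lt_compat; lra). nra.
  - replace (Finite c) with (Rbar_minus c 0) by (simpl; f_equal; ring).
    apply is_lim_seq_minus'; [apply is_lim_seq_const|exact Hinv].
  - replace (Finite c) with (Rbar_plus c 0) by (simpl; f_equal; ring).
    apply is_lim_seq_plus'; [apply is_lim_seq_const|exact Hinv].
Qed.

Lemma continuous_Rabs_lt (f : R -> R) (z e : R) : continuous f z -> 0 < e ->
  exists eta, 0 < eta /\ forall w, Rabs (w - z) < eta -> Rabs (f w - f z) < e.
Proof.
  intros Hf He. apply continuity_pt_filterlim in Hf.
  destruct (Hf e He) as [eta [Heta Hw]]. exists eta. split; [exact Heta|]. intros w Hwz.
  destruct (Req_dec z w) as [<-|Hne]; [rewrite Rminus_diag, Rabs_R0; exact He|].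
  apply (Hw w). split; [split; [constructor|exact Hne]|exact Hwz].
Qed.

Definition cdf (h : R -> R) (x : R) : R := RInt h 0 x.

Section InvariantDensity.
Variables (F h : R -> R).
Hypothesis HF : C1_circle_diffeo_lift F.
Hypothesis Hh : invariant_density F h.

Lemma density_continuous (x : R) : continuous h x.
Proof. apply Hh. Qed.

Lemma density_ex_RInt (a b : R) : ex_RInt h a b.
Proof. apply (@ex_RInt_continuous R_CompleteNormedModule). intros; apply density_continuous. Qed.

Lemma cdf_sub (a b : R) : cdf h b - cdf h a = RInt h a b.
Proof.
  unfold cdf. rewrite <- (RInt_Chasles h 0 a b) by apply density_ex_RInt.
  unfold plus; simpl. ring.
Qed.

Lemma cdf_0 : cdf h 0 = 0.
Proof. apply (@RInt_point R_CompleteNormedModule). Qed.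

Lemma cdf_add_1 (x : R) : cdf h (x + 1) = cdf h x + 1.
Proof.
  destruct Hh as [Hper [_ [_ [H01 _]]]].
  assert (Eshift : RInt h 1 (x + 1) = RInt h 0 x).
  { pose proof (RInt_comp_lin h 1 1 0 x (density_ex_RInt _ _)) as L.
    replace (1 * 0 + 1) with 1 in L by ring. replace (1 * x + 1) with (x + 1) in L by ring.
    rewrite <- L. apply RInt_ext. intros y _.
    unfold scal; simpl; unfold mult; simpl. rewrite !Rmult_1_l, Hper. reflexivity. }
  unfold cdf. rewrite <- (RInt_Chasles h 0 1 (x + 1)) by apply density_ex_RInt.
  rewrite Eshift, H01. unfold plus; simpl. ring.
Qed.

Lemma cdf_add_IZR (z : Z) (x : R) : cdf h (x + IZR z) = cdf h x + IZR z.
Proof. rewrite (add_IZR_of_add_1 (cdf h) 1 cdf_add_1). ring. Qed.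

Lemma density_add_IZR (z : Z) (x : R) : h (x + IZR z) = h x.
Proof. rewrite (add_IZR_of_add_1 h 0); [ring|]. intro y. destruct Hh as [Hper _]. rewrite Hper. ring. Qed.

Lemma density_bounds : exists mh Mh, 0 < mh /\ forall x, mh <= h x <= Mh.
Proof.
  assert (Hc : forall c, 0 <= c <= 1 -> continuity_pt h c).
  { intros c _. apply continuity_pt_filterlim, density_continuous. }
  destruct (continuity_ab_maj h 0 1 ltac:(lra) Hc) as [xM [HM _]].
  destruct (continuity_ab_min h 0 1 ltac:(lra) Hc) as [xm [Hm _]].
  exists (h xm), (h xM). split; [apply Hh|].
  intro x. destruct (frac_decomp x) as [z [y [Hy ->]]]. rewrite density_add_IZR.
  split; [apply Hm|apply HM]; lra.
Qed.

Lemma RInt_density_bounds (mh Mh a b : R) : (forall x, mh <= h x <= Mh) -> a <= b ->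
  mh * (b - a) <= RInt h a b <= Mh * (b - a).
Proof.
  intros Hb Hab.
  replace (mh * (b - a)) with (RInt (fun _ => mh) a b) by (rewrite RInt_const; unfold scal; simpl; unfold mult; simpl; ring).
  replace (Mh * (b - a)) with (RInt (fun _ => Mh) a b) by (rewrite RInt_const; unfold scal; simpl; unfold mult; simpl; ring).
  split; apply RInt_le; auto using ex_RInt_const, density_ex_RInt; intros; apply Hb.
Qed.

Lemma is_derive_cdf (x : R) : is_derive (cdf h) x (h x).
Proof.
  apply (is_derive_RInt h (cdf h) 0 x); [|apply density_continuous].
  apply filter_forall. intro y. apply (@RInt_correct R_CompleteNormedModule), density_ex_RInt.
Qed.

Lemma cdf_continuous (x : R) : continuous (cdf h) x.
Proof. apply (@ex_derive_continuous R_AbsRing R_NormedModule). eexists. apply is_derive_cdf. Qed.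

Lemma RInt_density_iter (q : nat) (a b : R) :
  RInt h (Nat.iter q F a) (Nat.iter q F b) = RInt h a b.
Proof.
  induction q as [|q IH]; [reflexivity|]. simpl. destruct Hh as [_ [_ [_ [_ Hinv]]]].
  rewrite Hinv. exact IH.
Qed.

Lemma ex_derive_iter (q : nat) (x : R) : ex_derive (Nat.iter q F) x.
Proof.
  revert x. induction q as [|q IH]; intro x.
  - apply ex_derive_id.
  - apply (ex_derive_comp F (Nat.iter q F)); [apply HF|apply IH].
Qed.

Lemma cdf_iter_sub (q : nat) (x : R) : cdf h (Nat.iter q F x) = cdf h x + cdf h (Nat.iter q F 0).
Proof.
  pose proof (cdf_sub (Nat.iter q F 0) (Nat.iter q F x)) as E.
  rewrite RInt_density_iter, <- cdf_sub, cdf_0 in E. lra.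
Qed.

(* Invariance of [h dx] makes [cdf (F^q y) - cdf y] constant; differentiate it. *)
Lemma density_iter_derive (q : nat) (x : R) :
  h (Nat.iter q F x) * Derive (Nat.iter q F) x = h x.
Proof.
  assert (D1 : is_derive (fun y => cdf h (Nat.iter q F y) - cdf h y) x
                 (Derive (Nat.iter q F) x * h (Nat.iter q F x) - h x)).
  { apply (@is_derive_minus R_AbsRing R_NormedModule); [|apply is_derive_cdf].
    apply (@is_derive_comp R_AbsRing R_NormedModule); [apply is_derive_cdf|].
    apply Derive_correct, ex_derive_iter. }
  assert (D2 : is_derive (fun y => cdf h (Nat.iter q F y) - cdf h y) x 0).
  { apply (@is_derive_ext R_AbsRing R_NormedModule (fun _ => cdf h (Nat.iter q F 0)));
      [|apply (@is_derive_const R_AbsRing R_NormedModule)].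
    intro y. rewrite (cdf_iter_sub q y). simpl. lra. }
  apply is_derive_unique in D1. apply is_derive_unique in D2. rewrite D2 in D1. lra.
Qed.

Lemma cdf_iter_0 (N : nat) : cdf h (Nat.iter N F 0) = INR N * cdf h (F 0).
Proof.
  induction N as [|N IH]; [rewrite Rmult_0_l; apply cdf_0|].
  rewrite Nat.iter_succ_r, cdf_iter_sub, IH, S_INR. ring.
Qed.

Lemma cdf_near_id (z : R) : Rabs (cdf h z - z) <= 1.
Proof.
  destruct (frac_decomp z) as [k [y [Hy ->]]]. rewrite cdf_add_IZR.
  replace (cdf h y + IZR k - (y + IZR k)) with (cdf h y - y) by ring.
  assert (Hpos : forall a b, a <= b -> 0 <= RInt h a b).
  { intros a b Hab. apply RInt_ge_0; [exact Hab|apply density_ex_RInt|]. intros; left; apply Hh. }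
  pose proof (Hpos 0 y (proj1 Hy)). pose proof (Hpos y 1 (Rlt_le _ _ (proj2 Hy))).
  rewrite <- cdf_sub, cdf_0 in H. rewrite <- cdf_sub in H0.
  replace (cdf h 1) with 1 in H0 by (symmetry; apply Hh). apply Rabs_le. lra.
Qed.

Variable rho : R.
Hypothesis Hrot : rotation_number F rho.

(* [F^n 0] stays within 1 of [cdf h (F^n 0) = n cdf h (F 0)]. *)
Lemma cdf_F_0 : cdf h (F 0) = rho.
Proof.
  assert (L : is_lim_seq (fun n => Nat.iter n F 0 / INR n) (cdf h (F 0))).
  { apply is_lim_seq_div_INR_of_bounded_dev with 1. intro n.
    rewrite <- cdf_iter_0, <- Rabs_Ropp, Ropp_minus_distr. apply cdf_near_id. }
  apply is_lim_seq_unique in L. apply is_lim_seq_unique in Hrot.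
  rewrite Hrot in L. injection L. auto.
Qed.

Lemma cdf_iter (q : nat) (x : R) : cdf h (Nat.iter q F x) = cdf h x + INR q * rho.
Proof. rewrite cdf_iter_sub, cdf_iter_0, cdf_F_0. reflexivity. Qed.

End InvariantDensity.

Section Holder.
Variables (F h : R -> R) (rho delta sigma C1 mh Mh c : R).
Hypothesis HF : C1_circle_diffeo_lift F.
Hypothesis Hh : invariant_density F h.
Hypothesis Hrho : 0 < rho < 1.
Hypothesis Hirr : irrational rho.
Hypothesis Hrot : rotation_number F rho.
Hypothesis Hmh : 0 < mh.
Hypothesis Hbounds : forall x, mh <= h x <= Mh.
Hypothesis HC1 : 0 <= C1.
Hypothesis Hd : 0 <= delta.
Hypothesis Hsig : delta < sigma < 1 + delta.
Hypothesis Hc : 0 < c.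
Hypothesis Hdio : forall n, c * Rpower (cf_Delta_prev rho n) (1 + delta) <= cf_Delta rho n.

Let s := sigma / (1 + delta).
Let al := sigma - delta.
Hypothesis Hderiv : forall n x,
  Rabs (Derive (Nat.iter (cf_q rho n) F) x - 1) <= C1 * Rpower (cf_Delta rho n) s.

Let A := Mh * C1.

Lemma step_const_nonneg : 0 <= A.
Proof. unfold A. pose proof (Hbounds 0). apply Rmult_le_pos; lra. Qed.

Lemma cdf_increment_bounds (a b : R) : a <= b ->
  mh * (b - a) <= cdf h b - cdf h a <= Mh * (b - a).
Proof. intro Hab. rewrite (cdf_sub F h Hh). apply (RInt_density_bounds F h Hh); auto. Qed.

Lemma cdf_lt (a b : R) : a < b -> cdf h a < cdf h b.
Proof. intro Hab. pose proof (cdf_increment_bounds a b (Rlt_le _ _ Hab)). nra. Qed.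

Lemma cdf_inj (a b : R) : cdf h a = cdf h b -> a = b.
Proof.
  intro E. destruct (Rtotal_order a b) as [H|[H|H]]; auto; apply cdf_lt in H; lra.
Qed.

Lemma cdf_surj (v : R) : exists z, cdf h z = v.
Proof.
  set (a := - (Rabs v / mh) - 1). set (b := Rabs v / mh + 1).
  assert (Ev : mh * (Rabs v / mh) = Rabs v) by (field; lra).
  assert (0 <= Rabs v / mh) by (apply Rdiv_le_0_compat; [apply Rabs_pos|lra]).
  pose proof (cdf_increment_bounds a 0 ltac:(unfold a; lra)).
  pose proof (cdf_increment_bounds 0 b ltac:(unfold b; lra)).
  rewrite (cdf_0 h) in H0, H1.
  pose proof (Rle_abs v). pose proof (Rle_abs (- v)). rewrite Rabs_Ropp in H3.
  destruct (IVT_gen_consistent (cdf h) a b v (cdf_continuous F h Hh)) as [z [_ Hz]].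
  - rewrite Rmin_left, Rmax_right; unfold a, b in *; nra.
  - exists z; exact Hz.
Qed.

(* [x -> F^(q_n) x - p_n] is conjugated by [cdf h] to the rotation by [q_n rho - p_n = +-Delta_n],
   and moves [h] by at most [A Delta_n^s]; use it or its inverse according to the sign. *)
Lemma rotation_step (n : nat) (x : R) : exists y,
  cdf h y = cdf h x + cf_Delta rho n /\ Rabs (h y - h x) <= A * Rpower (cf_Delta rho n) s.
Proof.
  set (q := cf_q rho n). set (p := cf_p rho n).
  set (T u := Nat.iter q F u + IZR (- Z.of_nat p)).
  assert (HT : forall u, cdf h (T u) = cdf h u + (INR q * rho - INR p)).
  { intro u. unfold T. rewrite (cdf_add_IZR F h Hh), (cdf_iter F h Hh rho Hrot), opp_IZR, <- INR_IZR_INZ.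
    ring. }
  assert (HhT : forall u, Rabs (h (T u) - h u) <= A * Rpower (cf_Delta rho n) s).
  { intro u. unfold T. rewrite (density_add_IZR F h Hh).
    rewrite <- (density_iter_derive F h HF Hh q u).
    replace (h (Nat.iter q F u) - h (Nat.iter q F u) * Derive (Nat.iter q F) u)
      with (- h (Nat.iter q F u) * (Derive (Nat.iter q F) u - 1)) by ring.
    rewrite Rabs_mult, Rabs_Ropp. unfold A. rewrite Rmult_assoc.
    pose proof (Hbounds (Nat.iter q F u)). rewrite Rabs_right by lra.
    apply Rmult_le_compat; try lra; [apply Rabs_pos|apply Hderiv]. }
  change (cf_Delta rho n) with (Rabs (INR q * rho - INR p)) in *.
  destruct (Rcase_abs (INR q * rho - INR p)) as [Hneg|Hpos].
  - destruct (cdf_surj (cdf h x + Rabs (INR q * rho - INR p))) as [y Hy].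
    exists y. split; [exact Hy|].
    assert (Ex : T y = x) by (apply cdf_inj; rewrite HT, Hy, Rabs_left by exact Hneg; ring).
    rewrite <- Ex, <- Rabs_Ropp, Ropp_minus_distr. apply HhT.
  - exists (T x). split; [rewrite HT, Rabs_right by exact Hpos; reflexivity|apply HhT].
Qed.

Lemma rotation_steps (n b : nat) (x : R) : exists y,
  cdf h y = cdf h x + INR b * cf_Delta rho n /\
  Rabs (h y - h x) <= INR b * (A * Rpower (cf_Delta rho n) s).
Proof.
  induction b as [|b [y1 [E1 B1]]].
  - exists x. split; [simpl; ring|]. rewrite Rminus_diag, Rabs_R0. simpl; lra.
  - destruct (rotation_step n y1) as [y [E2 B2]]. exists y. rewrite S_INR. split; [rewrite E2, E1; ring|].
    replace (h y - h x) with ((h y - h y1) + (h y1 - h x)) by ring.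
    eapply Rle_trans; [apply Rabs_triang|lra].
Qed.

Lemma rotation_steps_remainder (m : nat) (x r : R) : 0 <= r -> exists y,
  0 <= cdf h x + r - cdf h y < cf_Delta rho m /\
  Rabs (h y - h x) <= A * r * Rpower (cf_Delta rho m) (s - 1).
Proof.
  intro Hr. pose proof (cf_Delta_pos rho Hrho Hirr m) as HD. set (D := cf_Delta rho m) in *.
  destruct (nat_multiple_bracket r D Hr HD) as [b [Hb1 Hb2]].
  destruct (rotation_steps m b x) as [y [E1 E2]]. exists y. fold D in E1, E2.
  split; [rewrite E1; lra|].
  eapply Rle_trans; [exact E2|].
  rewrite (Rpower_sub_1 D s) by exact HD.
  replace (INR b * (A * (D * Rpower D (s - 1)))) with (A * (INR b * D) * Rpower D (s - 1)) by ring.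
  pose proof step_const_nonneg. apply Rmult_le_compat_r; [left; apply Rpower_pos|].
  apply Rmult_le_compat_l; lra.
Qed.

Lemma exponent_lt_1 : s < 1.
Proof. apply Rdiv_lt_1; lra. Qed.

Lemma exponent_identity : al - 1 = (1 + delta) * (s - 1).
Proof. unfold s, al. field. lra. Qed.

Let c1 := Rpower c (s - 1).

Lemma cf_Delta_S_Rpower_le (n : nat) :
  Rpower (cf_Delta rho (S n)) (s - 1) <= c1 * Rpower (cf_Delta rho n) ((1 + delta) * (s - 1)).
Proof.
  pose proof (Hdio (S n)) as H. rewrite (cf_Delta_prev_S rho Hrho Hirr) in H.
  pose proof (cf_Delta_pos rho Hrho Hirr n). pose proof exponent_lt_1.
  eapply Rle_trans.
  - apply Rle_Rpower_l_nonpos; [lra|]. split; [|exact H]. apply Rmult_lt_0_compat; [lra|apply Rpower_pos].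
  - unfold c1. rewrite <- Rpower_mult_distr, Rpower_mult by (try apply Rpower_pos; lra). lra.
Qed.

Lemma cf_Delta_mul_S_Rpower_le (n : nat) :
  cf_Delta rho n * Rpower (cf_Delta rho (S n)) (s - 1) <= c1 * Rpower (cf_Delta rho n) al.
Proof.
  pose proof (cf_Delta_pos rho Hrho Hirr n).
  eapply Rle_trans; [apply Rmult_le_compat_l; [lra|apply cf_Delta_S_Rpower_le]|].
  rewrite (Rpower_sub_1 _ al), exponent_identity by exact H. right; ring.
Qed.


Let r2 := Rpower (/ 2) al.

Lemma r2_range : 0 <= r2 < 1.
Proof.
  split; [left; apply Rpower_pos|]. unfold r2. rewrite Rpower_inv_l by lra.
  rewrite <- Rinv_1. apply Rinv_lt_contravar; [rewrite Rmult_1_l; apply Rpower_pos|].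
  rewrite <- (Rpower_O 2) at 1 by lra. apply Rpower_lt; unfold al; lra.
Qed.

Lemma cf_Delta_SS_Rpower_le (m : nat) :
  Rpower (cf_Delta rho (S (S m))) al <= r2 * Rpower (cf_Delta rho m) al.
Proof.
  unfold r2. rewrite Rpower_mult_distr by (try apply cf_Delta_pos; auto; lra).
  apply Rle_Rpower_l; [unfold al; lra|]. split; [apply cf_Delta_pos; auto|].
  pose proof (cf_Delta_SS_le_half rho Hrho Hirr m). lra.
Qed.

Definition holder_potential (m : nat) : R :=
  (Rpower (cf_Delta rho m) al + Rpower (cf_Delta rho (S m)) al) / (1 - r2).

Lemma holder_potential_nonneg (m : nat) : 0 <= holder_potential m.
Proof.
  pose proof r2_range. unfold holder_potential. apply Rdiv_le_0_compat; [|lra].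
  pose proof (Rpower_pos (cf_Delta rho m) al). pose proof (Rpower_pos (cf_Delta rho (S m)) al). lra.
Qed.

Lemma holder_potential_step (m : nat) :
  Rpower (cf_Delta rho m) al + holder_potential (S m) <= holder_potential m.
Proof.
  pose proof r2_range. pose proof (cf_Delta_SS_Rpower_le m). unfold holder_potential.
  apply (Rmult_le_reg_r (1 - r2)); [lra|]. unfold Rdiv.
  rewrite Rmult_plus_distr_r, !Rmult_assoc, Rinv_l by lra. lra.
Qed.

Lemma holder_potential_le (m : nat) :
  holder_potential m <= 2 / (1 - r2) * Rpower (cf_Delta rho m) al.
Proof.
  pose proof r2_range. unfold holder_potential.
  replace (2 / (1 - r2) * Rpower (cf_Delta rho m) al)
    with ((Rpower (cf_Delta rho m) al + Rpower (cf_Delta rho m) al) / (1 - r2)) by (field; lra).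
  apply Rmult_le_compat_r; [left; apply Rinv_0_lt_compat; lra|].
  assert (Rpower (cf_Delta rho (S m)) al <= Rpower (cf_Delta rho m) al).
  { apply Rle_Rpower_l; [unfold al; lra|]. split; [apply cf_Delta_pos; auto|].
    left; apply cf_Delta_S_lt; auto. }
  lra.
Qed.

(* Greedy expansion of an increment [r] of [cdf h] in the scales [Delta_m, ..., Delta_(m+M)]. *)
Lemma greedy_rotation (M : nat) : forall m x r, 0 <= r -> exists y,
  cdf h x + r - cf_Delta rho (m + M) < cdf h y <= cdf h x + r /\
  Rabs (h y - h x) <= A * r * Rpower (cf_Delta rho m) (s - 1) + A * c1 * holder_potential m.
Proof.
  pose proof step_const_nonneg as HA. assert (Hc1 : 0 < c1) by apply Rpower_pos.
  induction M as [|M IH]; intros m x r Hr.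
  - destruct (rotation_steps_remainder m x r Hr) as [y [Hy B]]. exists y.
    rewrite Nat.add_0_r. split; [lra|].
    pose proof (holder_potential_nonneg m). pose proof (Rmult_le_pos _ _ (Rmult_le_pos _ _ HA (Rlt_le _ _ Hc1)) H). lra.
  - destruct (rotation_steps_remainder m x r Hr) as [y1 [Hy1 B1]].
    destruct (IH (S m) y1 (cdf h x + r - cdf h y1) (proj1 Hy1)) as [y [Hy B2]].
    exists y. replace (m + S M)%nat with (S m + M)%nat by lia. split; [lra|].
    replace (h y - h x) with ((h y - h y1) + (h y1 - h x)) by ring.
    eapply Rle_trans; [apply Rabs_triang|].
    assert (Hrem : A * (cdf h x + r - cdf h y1) * Rpower (cf_Delta rho (S m)) (s - 1)
                   <= A * c1 * Rpower (cf_Delta rho m) al).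
    { rewrite Rmult_assoc, (Rmult_assoc A c1). apply Rmult_le_compat_l; [exact HA|].
      eapply Rle_trans; [|apply cf_Delta_mul_S_Rpower_le].
      apply Rmult_le_compat_r; [left; apply Rpower_pos|lra]. }
    pose proof (holder_potential_step m).
    assert (A * c1 * (Rpower (cf_Delta rho m) al + holder_potential (S m)) <= A * c1 * holder_potential m)
      by (apply Rmult_le_compat_l; [apply Rmult_le_pos|]; lra).
    lra.
Qed.

Let B0 := A * c1 * (1 + 2 / (1 - r2)).

Lemma greedy_rotation_bracket (n M : nat) (x d : R) : cf_Delta rho (S n) <= d < cf_Delta rho n ->
  exists z, cdf h x + d - cf_Delta rho (S n + M) < cdf h z <= cdf h x + d /\
            Rabs (h z - h x) <= B0 * Rpower d al.
Proof.
  intros [Hn1 Hn2]. pose proof (cf_Delta_pos rho Hrho Hirr (S n)) as Hdp.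
  pose proof step_const_nonneg as HA. assert (Hc1 : 0 < c1) by apply Rpower_pos. pose proof r2_range.
  destruct (greedy_rotation M (S n) x d ltac:(lra)) as [z [Hz Bz]]. exists z. split; [exact Hz|].
  eapply Rle_trans; [exact Bz|]. unfold B0.
  assert (Hlead : d * Rpower (cf_Delta rho (S n)) (s - 1) <= c1 * Rpower d al).
  { rewrite (Rpower_sub_1 d al), exponent_identity by lra.
    replace (c1 * (d * Rpower d ((1 + delta) * (s - 1)))) with (d * (c1 * Rpower d ((1 + delta) * (s - 1))))
      by ring.
    apply Rmult_le_compat_l; [lra|]. eapply Rle_trans; [apply cf_Delta_S_Rpower_le|].
    apply Rmult_le_compat_l; [lra|]. apply Rle_Rpower_l_nonpos; [pose proof exponent_lt_1; nra|].
    split; [lra|]. apply Rlt_le, Hn2. }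
  assert (Htail : holder_potential (S n) <= 2 / (1 - r2) * Rpower d al).
  { eapply Rle_trans; [apply holder_potential_le|].
    apply Rmult_le_compat_l; [apply Rdiv_le_0_compat; lra|].
    apply Rle_Rpower_l; [unfold al; lra|]. split; [exact Hdp|exact Hn1]. }
  assert (A * (d * Rpower (cf_Delta rho (S n)) (s - 1)) <= A * (c1 * Rpower d al))
    by (apply Rmult_le_compat_l; lra).
  assert (A * (c1 * holder_potential (S n)) <= A * (c1 * (2 / (1 - r2) * Rpower d al)))
    by (apply Rmult_le_compat_l; [|apply Rmult_le_compat_l]; lra).
  lra.
Qed.

(* The greedy point [z] only approximates [y] from below; conclude by continuity of [h] at [y]. *)
Lemma density_holder_cdf_small (n : nat) (x y : R) :
  cf_Delta rho (S n) <= cdf h y - cdf h x < cf_Delta rho n ->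
  Rabs (h y - h x) <= B0 * Rpower (cdf h y - cdf h x) al.
Proof.
  intro Hn. apply le_epsilon. intros e He.
  destruct (continuous_Rabs_lt h y e (density_continuous F h Hh y) He) as [eta [Heta Hcl]].
  destruct (cf_Delta_small rho Hrho Hirr (mh * eta) ltac:(nra)) as [M HM].
  destruct (greedy_rotation_bracket n M x _ Hn) as [z [[Z1 Z2] Z3]].
  assert (cf_Delta rho (S n + M) <= cf_Delta rho M) by (apply cf_Delta_le; auto; lia).
  assert (Hzy : z <= y) by (destruct (Rle_lt_dec z y) as [|L]; [assumption|apply cdf_lt in L; lra]).
  pose proof (cdf_increment_bounds z y Hzy).
  assert (Rabs (h z - h y) < e) by (apply Hcl; rewrite Rabs_left1 by lra; nra).
  replace (h y - h x) with ((h z - h x) - (h z - h y)) by ring.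
  eapply Rle_trans; [apply Rabs_triang|]. rewrite Rabs_Ropp. lra.
Qed.

Lemma density_holder_cdf_large (x y : R) : rho <= cdf h y - cdf h x ->
  Rabs (h y - h x) <= Mh / Rpower rho al * Rpower (cdf h y - cdf h x) al.
Proof.
  intro Hd0. pose proof (Hbounds x). pose proof (Hbounds y). pose proof (Rpower_pos rho al).
  assert (Rpower rho al <= Rpower (cdf h y - cdf h x) al) by (apply Rle_Rpower_l; unfold al; lra).
  apply Rle_trans with (Mh / Rpower rho al * Rpower rho al).
  - unfold Rdiv. rewrite Rmult_assoc, Rinv_l, Rmult_1_r by lra. apply Rabs_le. lra.
  - apply Rmult_le_compat_l; [apply Rdiv_le_0_compat|]; lra.
Qed.

Let B := Rmax B0 (Mh / Rpower rho al).

Lemma density_holder_cdf (x y : R) : x < y -> Rabs (h y - h x) <= B * Rpower (cdf h y - cdf h x) al.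
Proof.
  intro Hxy. pose proof (cdf_lt x y Hxy) as Hlt.
  assert (HB : forall K, K <= B -> K * Rpower (cdf h y - cdf h x) al <= B * Rpower (cdf h y - cdf h x) al)
    by (intros; apply Rmult_le_compat_r; [left; apply Rpower_pos|assumption]).
  destruct (Rlt_le_dec (cdf h y - cdf h x) (cf_Delta rho 0)) as [Hsmall|Hlarge].
  - destruct (cf_Delta_bracket rho Hrho Hirr (cdf h y - cdf h x) ltac:(lra)) as [n Hn].
    eapply Rle_trans; [apply (density_holder_cdf_small n), Hn|apply HB, Rmax_l].
  - rewrite (cf_Delta_0 rho Hrho Hirr) in Hlarge.
    eapply Rle_trans; [apply density_holder_cdf_large, Hlarge|apply HB, Rmax_r].
Qed.

Lemma density_holder : exists C, forall u v, Rabs (h u - h v) <= C * Rpower (Rabs (u - v)) al.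
Proof.
  assert (HMh : 0 < Mh) by (pose proof (Hbounds 0); lra).
  assert (HB : 0 <= B).
  { eapply Rle_trans; [|apply Rmax_r]. apply Rdiv_le_0_compat; [lra|apply Rpower_pos]. }
  assert (Hkey : forall u v, u < v -> Rabs (h v - h u) <= B * Rpower Mh al * Rpower (v - u) al).
  { intros u v Huv. eapply Rle_trans; [apply density_holder_cdf; exact Huv|].
    pose proof (cdf_increment_bounds u v (Rlt_le _ _ Huv)). pose proof (cdf_lt u v Huv).
    rewrite Rmult_assoc, Rpower_mult_distr by lra. apply Rmult_le_compat_l; [exact HB|].
    apply Rle_Rpower_l; [unfold al; lra|lra]. }
  exists (B * Rpower Mh al). intros u v.
  destruct (Rtotal_order u v) as [H|[<-|H]].
  - rewrite <- Rabs_Ropp, Ropp_minus_distr, (Rabs_left (u - v)), Ropp_minus_distr by lra.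
    apply Hkey, H.
  - rewrite !Rminus_diag, Rabs_R0. apply Rmult_le_pos; [apply Rmult_le_pos|]; auto; left; apply Rpower_pos.
  - rewrite (Rabs_right (u - v)) by lra. apply Hkey, H.
Qed.

End Holder.

Theorem proposition4 (delta sigma rho : R) (F h : R -> R) :
  0 <= delta ->
  C1_circle_diffeo_lift F ->
  0 < rho < 1 ->
  rotation_number F rho ->
  D_delta delta rho ->
  invariant_density F h ->
  0 <= sigma < 1 + delta ->
  (exists C : R, forall (n : nat) (xi : R),
      Rabs (Derive (Nat.iter (cf_q rho n) F) xi - 1) <= C * E_ns rho n sigma) ->
  (exists C' : R, forall (n : nat) (xi : R),
      Rabs (Derive (Nat.iter (cf_q rho n) F) xi - 1)
        <= C' * Rpower (cf_Delta rho n) (sigma / (1 + delta)))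
  /\ C_alpha (Rmax 0 (sigma - delta)) h.
Proof.
  intros Hd HF Hrho Hrot HD Hh Hsig [C HC].
  assert (Hirr : irrational rho) by apply HD.
  destruct (E_ns_le_Delta_pow delta sigma rho Hrho Hirr Hd HD Hsig) as [K [HK HE]].
  set (C1 := Rmax C 0 * K).
  assert (Hderiv : forall n xi, Rabs (Derive (Nat.iter (cf_q rho n) F) xi - 1)
                                <= C1 * Rpower (cf_Delta rho n) (sigma / (1 + delta))).
  { intros n xi. eapply Rle_trans; [apply HC|].
    apply Rle_trans with (Rmax C 0 * E_ns rho n sigma).
    - apply Rmult_le_compat_r; [apply E_ns_nonneg; auto|apply Rmax_l].
    - unfold C1. rewrite Rmult_assoc. apply Rmult_le_compat_l; [apply Rmax_r|apply HE]. }
  split; [exists C1; exact Hderiv|].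
  split; [apply Hh|]. intro Hpos.
  assert (Hsd : delta < sigma) by (destruct (Rle_dec (sigma - delta) 0); [rewrite Rmax_left in Hpos|]; lra).
  rewrite Rmax_right by lra.
  destruct (density_bounds F h Hh) as [mh [Mh [Hmh Hbounds]]].
  destruct (D_delta_cf_Delta_lower rho Hrho Hirr delta Hd HD) as [c [Hc Hdio]].
  apply (density_holder F h rho delta sigma C1 mh Mh c); auto; [|lra].
  unfold C1. apply Rmult_le_pos; [apply Rmax_r|exact HK].
Qed.
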